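(* Let $y$ be a single real variable and $x=(x_1,\dots,x_n)$ real variables, and let $f(x,y)\in\mathbb R[x,y]$. Assume that for every $y_0\in\mathbb R$ the specialized polynomial $f(\cdot,y_0)\in\mathbb R[x]$ is a square in $\mathbb R[x]$. Then there exist $g(y)\in\mathbb R[y]$ and $h(x,y)\in\mathbb R[x,y]$ such that \[ f(x,y)=g(y)\,h(x,y)^2. \] *)

From HB Require Import structures.
From mathcomp Require Import all_boot all_order all_algebra.
From mathcomp Require Import reals.
From mathcomp Require Import mpoly.
Set Implicit Arguments. Unset Strict Implicit. Unset Printing Implicit Defensive.

From HB Require Import structures.
From mathcomp Require Import all_boot all_order all_algebra.
From mathcomp Require Import reals boolp.
From mathcomp Require Import mpoly complex.
From mathcomp Require Import ring.
Import Order.TTheory GRing.Theory Num.Theory.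
Set Implicit Arguments. Unset Strict Implicit. Unset Printing Implicit Defensive.
Local Open Scope ring_scope.

(* Let x^M be the largest monomial of f, viewed as a polynomial in x with
   coefficients in R[y], and cM(y) its coefficient.  Whenever cM(y0) != 0, the
   square f(., y0) equals cM(y0) s^2 for an s with leading monomial x^N, where
   M = 2N, and leading coefficient 1.  Comparing coefficients of x^(N+m) in
   this identity, from the top down, writes every coefficient of s as a
   polynomial in y0 divided by a power of cM(y0); hence cM^j s is the
   specialisation at y0 of a single S(x, y), and f cM^(2j+1) = (cM S)^2 because
   both sides agree for infinitely many y0.
   It remains to remove the factor d = cM^(2j+1) from a relation
   f d = e S^2.  If d is not constant, take a complex root z of d and its
   minimal polynomial p over R.  Specialising y to z gives e(z) S(x, z)^2 = 0,
   so p divides e or every coefficient of S, and p cancels from d. *)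

Lemma poly_nat_roots0 (B : idomainType) (p : {poly B}) :
  injective (fun i : nat => i%:R : B) -> (forall i : nat, p.[i%:R] = 0) -> p = 0.
Proof.
move=> natr_inj p_nat0; apply/eqP; apply: contraT => nz_p.
have := max_poly_roots (rs := [seq i%:R | i <- iota 0 (size p)]) nz_p.
rewrite size_map size_iota ltnn; apply.
  by apply/allP => _ /mapP[i _ ->]; apply/rootP.
by rewrite map_inj_uniq ?iota_uniq.
Qed.

Lemma poly_nat_nonroot (B : idomainType) (p : {poly B}) :
  injective (fun i : nat => i%:R : B) -> p != 0 -> exists i : nat, p.[i%:R] != 0.
Proof.
move=> natr_inj /negP nz_p; apply: contra_notP nz_p => no_nonroot.
apply/eqP/poly_nat_roots0 => // i; apply/eqP.
by apply: contra_notT no_nonroot; exists i.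
Qed.

Lemma rdivp_eq_of_root (B : comNzRingType) (B' : nzRingType)
    (ev : {rmorphism {poly B} -> B'}) (p q : {poly B}) :
    p \is monic -> ev p = 0 ->
    (forall r : {poly B}, (size r < size p)%N -> ev r = 0 -> r = 0) ->
  ev q = 0 -> q = Pdiv.CommonRing.rdivp q p * p.
Proof.
move=> mon_p evp min_p evq; have qE := Pdiv.RingMonic.rdivp_eq mon_p q.
have rmod0 : Pdiv.CommonRing.rmodp q p = 0.
  apply: min_p; first exact/Pdiv.CommonRing.ltn_rmodpN0/monic_neq0.
  by move/(congr1 ev): qE; rewrite rmorphD rmorphM evp mulr0 add0r evq => <-.
by rewrite {1}qE rmod0 addr0.
Qed.

Lemma exists_minimal_monic_root (F : fieldType) (B' : nzRingType)
    (ev : {rmorphism {poly F} -> B'}) (d : {poly F}) :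
    d != 0 -> ev d = 0 ->
  exists p : {poly F}, [/\ p \is monic, ev p = 0, (1 < size p)%N &
    forall r : {poly F}, (size r < size p)%N -> ev r = 0 -> r = 0].
Proof.
pose root_of_size k := `[< exists p, [/\ p \is monic, ev p = 0 & size p = k] >].
have monic_root r : r != 0 -> ev r = 0 -> root_of_size (size r).
  move=> nz_r evr; apply/asboolP; exists ((lead_coef r)^-1 *: r); split.
  - by rewrite monicE lead_coefZ mulVf ?lead_coef_eq0.
  - by rewrite -mul_polyC rmorphM evr mulr0.
  - by rewrite size_scale ?invr_eq0 ?lead_coef_eq0.
move=> nz_d evd; have ex_root : exists k, root_of_size k.
  by exists (size d); apply: monic_root.
have [_ /asboolP[p [mon_p evp <-]] min_p] := ex_minnP ex_root.
exists p; split=> //; last first.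
  move=> r lt_rp evr; apply/eqP; apply: contraTT lt_rp => nz_r.
  by rewrite -leqNgt min_p // monic_root.
rewrite ltnNge; apply/negP => le_p1.
have pC := size1_polyC le_p1; have := monicP mon_p.
rewrite pC lead_coefC => p0; move: evp; rewrite pC p0 rmorph1.
by move/eqP; rewrite oner_eq0.
Qed.

Lemma mcoeff_horner_mpolyC (B : comNzRingType) n (p : {poly {mpoly B[n]}}) c m :
  (p.[c%:MP])@_m = (map_poly (mcoeff m) p).[c].
Proof.
rewrite horner_coef (@horner_coef_wide _ (size p)); last exact: size_poly.
rewrite raddf_sum; apply: eq_bigr => i _.
by rewrite -rmorphXn mulrC /= mcoeffCM coef_map /= mulrC.
Qed.

Section SwapVariables.
Variables (B : comNzRingType) (n : nat).

Definition yx_swap (p : {poly {mpoly B[n]}}) : {mpoly {poly B}[n]} :=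
  \sum_(i < size p) 'X^i *: map_mpoly polyC p`_i.

Lemma mcoeff_yx_swap p m : (yx_swap p)@_m = map_poly (mcoeff m) p.
Proof.
rewrite /yx_swap raddf_sum /= [RHS]poly_def; apply: eq_bigr => i _.
by rewrite mcoeffZ mcoeff_map_mpoly mulrC mul_polyC.
Qed.

Lemma yx_swap_eq0 p : (yx_swap p == 0) = (p == 0).
Proof.
apply/eqP/eqP => [sw0|->]; last by rewrite /yx_swap size_poly0 big_ord0.
apply/polyP => i; apply/mpolyP => m.
have := congr1 (fun q : {mpoly {poly B}[n]} => (q@_m)`_i) sw0.
by rewrite /= mcoeff_yx_swap coef_map /= !mcoeff0 !coef0 mcoeff0.
Qed.

End SwapVariables.

Section Monomials.
Variable n : nat.
Implicit Types (m k : 'X_{1..n}).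

Lemma mulmn2_inj m k : (m *+ 2)%MM = (k *+ 2)%MM -> m = k.
Proof.
move/mnmP => mk; apply/mnmP => i; have := mk i; rewrite !mulmnE.
by move/eqP; rewrite eqn_mul2r => /eqP.
Qed.

Lemma ltmc_add_swap m1 m2 k1 k2 :
  (m1 + m2 = k1 + k2)%MM -> (k1 < m1)%O -> (m2 < k2)%O.
Proof.
move=> mk lt_k1; rewrite ltNge; apply/negP => le_k2.
by have := lemc_lt_add le_k2 lt_k1; rewrite addmC [X in (_ < X)%O]addmC mk ltxx.
Qed.

Lemma ltmc_bounded_ind D (P : 'X_{1..n} -> Prop) :
  (forall m, (forall k, (m < k)%O -> (mdeg k < D)%N -> P k) -> P m) ->
  forall m, P m.
Proof.
move=> IH m; pose above m := #|[pred k : 'X_{1..n < D} | (m < bmnm k)%O]|.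
suff : forall c m, (above m < c)%N -> P m by apply; apply: ltnSn.
elim=> [//|c IHc] {}m lt_m; apply: IH => k lt_mk lt_kD; apply: IHc.
rewrite -ltnS; apply: leq_trans lt_m; rewrite ltnS; apply: proper_card.
rewrite properE; apply/andP; split.
  by apply/subsetP => x; rewrite !inE => /(lt_trans lt_mk).
by apply/subsetPn; exists (BMultinom lt_kD); rewrite !inE /= ?ltxx.
Qed.

End Monomials.

Lemma mlead_eq (B : nzRingType) n (p : {mpoly B[n]}) m :
  p@_m != 0 -> (forall k, (m < k)%O -> p@_k = 0) -> mlead p = m.
Proof.
move=> nz_pm gt_m; apply/le_anti/andP; split; last first.
  by apply: msupp_le_mlead; rewrite mcoeff_msupp.
rewrite leNgt; apply/negP => /gt_m/eqP; rewrite mleadc_eq0.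
by apply/negP; apply: contraNneq nz_pm => ->; rewrite mcoeff0.
Qed.

Section SquareUpToFactor.
Variables (R : numFieldType) (n : nat) (f : {poly {mpoly R[n]}}).
Hypotheses (nz_f : f != 0)
  (fy_sq : forall y0 : R, exists q : {mpoly R[n]}, f.[y0%:MP] = q ^+ 2).

Local Notation A := {mpoly R[n]}.
Local Notation "g ^:MP" := (map_poly (@mpolyC n R) g)
  (at level 2, format "g ^:MP").
Local Notation M := (mlead (yx_swap f)).
Local Notation cM := (mleadc (yx_swap f)).

Lemma mcoeff_fy y0 m : (f.[y0%:MP])@_m = ((yx_swap f)@_m).[y0].
Proof. by rewrite mcoeff_horner_mpolyC mcoeff_yx_swap. Qed.

Lemma cM_neq0 : cM != 0.
Proof. by rewrite mleadc_eq0 yx_swap_eq0. Qed.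

Lemma mlead_fy y0 : cM.[y0] != 0 -> mlead f.[y0%:MP] = M.
Proof.
move=> nz_cMy; apply: mlead_eq; first by rewrite mcoeff_fy.
by move=> m /mcoeff_gt_mlead; rewrite mcoeff_fy => ->; rewrite horner0.
Qed.

Lemma mlead_sqrt_fy y0 q : cM.[y0] != 0 -> f.[y0%:MP] = q ^+ 2 ->
  (mlead q *+ 2)%MM = M /\ mleadc q ^+ 2 = cM.[y0].
Proof.
move=> nz_cMy fyE; have nz_q : q != 0.
  by apply: contraNneq nz_cMy => q0; rewrite -mcoeff_fy fyE q0 expr0n mcoeff0.
have lead_q2 : (mlead q *+ 2)%MM = M by rewrite -mleadX // -fyE mlead_fy.
by split=> //; rewrite -mleadcX -fyE mcoeff_fy lead_q2.
Qed.

Section NormalizedSquareRoot.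
Variable N : 'X_{1..n}.

Definition nsqrt y0 (s : A) : Prop :=
  [/\ cM.[y0] != 0, cM.[y0] *: s ^+ 2 = f.[y0%:MP], s@_N = 1 &
      forall k, (N < k)%O -> s@_k = 0].

Lemma nsqrt_exists y0 : M = (N + N)%MM -> cM.[y0] != 0 -> exists s, nsqrt y0 s.
Proof.
move=> MN nz_cMy; have [q fyE] := fy_sq y0.
have [lead_q2 lead_cq] := mlead_sqrt_fy nz_cMy fyE.
have lead_q : mlead q = N by apply: mulmn2_inj; rewrite lead_q2 MN.
have nz_cq : mleadc q != 0.
  by apply: contraNneq nz_cMy; rewrite -lead_cq => ->; rewrite expr0n.
exists ((mleadc q)^-1 *: q); split=> //.
- by rewrite exprZn scalerA -lead_cq -exprMn mulfV // expr1n scale1r fyE.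
- by rewrite mcoeffZ -lead_q mulVf.
- by move=> k; rewrite -lead_q mcoeffZ => /mcoeff_gt_mlead ->; rewrite mulr0.
Qed.

Lemma nsqrt_msize y0 s : nsqrt y0 s -> (msize s <= (mdeg N).+1)%N.
Proof.
move=> [_ _ sN1 sgtN]; have nz_s : s != 0.
  by apply: contra_eq_neq sN1 => ->; rewrite mcoeff0 eq_sym oner_neq0.
have -> : N = mlead s by apply/esym/mlead_eq; rewrite ?sN1 ?oner_neq0.
by rewrite mlead_deg.
Qed.

Definition cM_frac (F : R -> A -> R) : Prop :=
  exists (j : nat) (T : {poly R}),
    forall y0 s, nsqrt y0 s -> cM.[y0] ^+ j * F y0 s = T.[y0].

Lemma cM_frac_ext F G : cM_frac F ->
  (forall y0 s, nsqrt y0 s -> F y0 s = G y0 s) -> cM_frac G.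
Proof. by move=> [j [T FE]] FG; exists j, T => y0 s sq; rewrite -FG ?FE. Qed.

Lemma cM_frac_poly T : cM_frac (fun y0 _ => T.[y0]).
Proof. by exists 0%N, T => y0 s _; rewrite mul1r. Qed.

Lemma cM_frac0 : cM_frac (fun _ _ => 0).
Proof. by apply: cM_frac_ext (cM_frac_poly 0) _ => y0 s _; rewrite horner0. Qed.

Lemma cM_frac_div T : cM_frac (fun y0 _ => T.[y0] / cM.[y0]).
Proof. by exists 1%N, T => y0 s [nz_cMy _ _ _]; rewrite mulrC divfK. Qed.

Lemma cM_fracD F G :
  cM_frac F -> cM_frac G -> cM_frac (fun y s => F y s + G y s).
Proof.
move=> [j1 [T1 FE]] [j2 [T2 GE]].
exists (j1 + j2)%N, (T1 * cM ^+ j2 + T2 * cM ^+ j1).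
move=> y0 s sq; rewrite hornerD !hornerM !horner_exp.
by rewrite -(FE y0 s sq) -(GE y0 s sq) exprD; ring.
Qed.

Lemma cM_fracB F G :
  cM_frac F -> cM_frac G -> cM_frac (fun y s => F y s - G y s).
Proof.
move=> [j1 [T1 FE]] [j2 [T2 GE]].
exists (j1 + j2)%N, (T1 * cM ^+ j2 - T2 * cM ^+ j1).
move=> y0 s sq; rewrite hornerD hornerN !hornerM !horner_exp.
by rewrite -(FE y0 s sq) -(GE y0 s sq) exprD; ring.
Qed.

Lemma cM_fracM F G :
  cM_frac F -> cM_frac G -> cM_frac (fun y s => F y s * G y s).
Proof.
move=> [j1 [T1 FE]] [j2 [T2 GE]]; exists (j1 + j2)%N, (T1 * T2).
by move=> y0 s sq; rewrite hornerM -(FE y0 s sq) -(GE y0 s sq) exprD; ring.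
Qed.

Lemma cM_frac_sum (I : Type) (r : seq I) (P : pred I) (F : I -> R -> A -> R) :
    (forall i, P i -> cM_frac (F i)) ->
  cM_frac (fun y s => \sum_(i <- r | P i) F i y s).
Proof.
move=> FP; elim: r => [|i r IHr].
  by apply: cM_frac_ext cM_frac0 _ => y0 s _; rewrite big_nil.
have [Pi|nPi] := boolP (P i).
  by apply: cM_frac_ext (cM_fracD (FP i Pi) IHr) _ => y0 s _; rewrite big_cons Pi.
by apply: cM_frac_ext IHr _ => y0 s _; rewrite big_cons (negbTE nPi).
Qed.

Lemma nsqrt_coef_lt m y0 s : (m < N)%O -> nsqrt y0 s ->
  s@_m = (((yx_swap f)@_(N + m)).[y0] / cM.[y0]
          - ((s - s@_m *: 'X_[m]) ^+ 2)@_(N + m)) / 2.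
Proof.
move=> lt_mN [nz_cMy sqE sN1 _]; set t := s - s@_m *: 'X_[m].
have tN1 : t@_N = 1 by rewrite mcoeffB mcoeffZ mcoeffX (lt_eqF lt_mN) mulr0 subr0.
have sq_coef : (s ^+ 2)@_(N + m) = (t ^+ 2)@_(N + m) + 2 * s@_m.
  rewrite -{1}(subrK (s@_m *: 'X_[m]) s) -/t sqrrD !mcoeffD.
  rewrite -scalerAr mcoeffZ addmC mcoeffMX tN1 exprZn mcoeffZ mcoeffXn.
  have -> : ((m *+ 2)%MM == (m + N)%MM) = false by rewrite eqm_add2l (lt_eqF lt_mN).
  by rewrite mulr0 addr0 mulr1 mulr_natl mulr2n.
have := congr1 (mcoeff (N + m)) sqE; rewrite /= mcoeffZ mcoeff_fy sq_coef => <-.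
have nz2 : (2 : R) != 0 by rewrite pnatr_eq0.
by field.
Qed.

Lemma cM_frac_tail_sq m : (m < N)%O ->
    (forall k, (m < k)%O -> cM_frac (fun _ s => s@_k)) ->
  cM_frac (fun _ s => ((s - s@_m *: 'X_[m]) ^+ 2)@_(N + m)).
Proof.
move=> lt_mN IH; pose t (s : A) := s - s@_m *: 'X_[m].
have tE s k : (t s)@_k = s@_k - s@_m * (m == k)%:R by rewrite mcoeffB mcoeffZ mcoeffX.
apply: (@cM_frac_ext (fun _ s =>
    \sum_(k : 'X_{1..n < _, _} | (N + m)%MM == (k.1 + k.2)%MM)
      (t s)@_k.1 * (t s)@_k.2)); last first.
  by move=> y0 s _; rewrite expr2 mcoeffM.
apply: cM_frac_sum => k /eqP NmE.
have kE : (m + N)%MM = (k.1 + k.2)%MM by rewrite addmC.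
have [m_k1|ne_mk1] := eqVneq m k.1.
  by apply: cM_frac_ext cM_frac0 _ => y0 s _; rewrite tE -m_k1 eqxx mulr1 subrr mul0r.
have [m_k2|ne_mk2] := eqVneq m k.2.
  apply: cM_frac_ext cM_frac0 _ => y0 s _.
  by rewrite (tE _ k.2) -m_k2 eqxx mulr1 subrr mulr0.
have tkE s : (t s)@_k.1 * (t s)@_k.2 = s@_k.1 * s@_k.2.
  by rewrite !tE (negbTE ne_mk1) (negbTE ne_mk2) !mulr0 !subr0.
have [lt_mk1|le_k1m] := ltP m k.1; last first.
  have lt_k1m : (bmnm k.1 < m)%O by rewrite lt_neqAle eq_sym ne_mk1.
  apply: cM_frac_ext cM_frac0 _ => y0 s [_ _ _ sgtN].
  by rewrite tkE (sgtN _ (ltmc_add_swap kE lt_k1m)) mulr0.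
have [lt_mk2|le_k2m] := ltP m k.2; last first.
  have lt_k2m : (bmnm k.2 < m)%O by rewrite lt_neqAle eq_sym ne_mk2.
  rewrite [(k.1 + _)%MM]addmC in kE.
  apply: cM_frac_ext cM_frac0 _ => y0 s [_ _ _ sgtN].
  by rewrite tkE (sgtN _ (ltmc_add_swap kE lt_k2m)) mul0r.
by apply: cM_frac_ext (cM_fracM (IH _ lt_mk1) (IH _ lt_mk2)) _ => y0 s _; rewrite tkE.
Qed.

Lemma cM_frac_coef_rec m : (forall k, (m < k)%O -> cM_frac (fun _ s => s@_k)) ->
  cM_frac (fun _ s => s@_m).
Proof.
move=> IH; case: (ltgtP m N) => [lt_mN|gt_mN|->].
- apply: cM_frac_ext (cM_fracM (cM_fracB (cM_frac_div _) (cM_frac_tail_sq lt_mN IH))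
                             (cM_frac_poly (2^-1)%:P)) _.
  by move=> y0 s sq; rewrite hornerC [RHS](nsqrt_coef_lt lt_mN sq).
- by apply: cM_frac_ext cM_frac0 _ => y0 s [_ _ _ ->].
- by apply: cM_frac_ext (cM_frac_poly 1) _ => y0 s [_ _ -> _]; rewrite hornerC.
Qed.

Lemma cM_frac_coef m : cM_frac (fun _ s => s@_m).
Proof.
move: m; apply: (@ltmc_bounded_ind _ (mdeg N).+1) => m IH.
apply: cM_frac_coef_rec => k lt_mk; have [le_kN|gt_kN] := leqP (mdeg k) (mdeg N).
  exact: IH.
by apply: cM_frac_ext cM_frac0 _ => y0 s [_ _ _ ->] //; apply: lt_mdeg_ltmc.
Qed.

Lemma cM_frac_nsqrt : exists (j : nat) (S : {poly A}),
  forall y0 s, nsqrt y0 s -> cM.[y0] ^+ j *: s = S.[y0%:MP].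
Proof.
have coefT (k : 'X_{1..n < (mdeg N).+1}) : exists jT : nat * {poly R},
    forall y0 s, nsqrt y0 s -> cM.[y0] ^+ jT.1 * s@_k = jT.2.[y0].
  by have [j [T kE]] := cM_frac_coef k; exists (j, T).
have [jT jTE] := fin_all_exists coefT; pose J := (\max_k (jT k).1)%N.
exists J, (\sum_k ((jT k).2 * cM ^+ (J - (jT k).1))^:MP * ('X_[bmnm k])%:P).
move=> y0 s sq; rewrite {1}(mpolywE (nsqrt_msize sq)) scaler_sumr horner_sum.
apply: eq_bigr => k _; rewrite hornerM hornerC horner_map /= mul_mpolyC.
rewrite scalerA hornerM horner_exp; congr (_ *: _).
have le_jJ : ((jT k).1 <= J)%N := @leq_bigmax _ (fun k => (jT k).1) k.
by rewrite -{1}(subnK le_jJ) exprD -mulrA jTE // mulrC.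
Qed.

End NormalizedSquareRoot.

Lemma square_up_to_factor :
  exists (d : {poly R}) (S : {poly A}), d != 0 /\ f * d^:MP = S ^+ 2.
Proof.
have natr_inj : injective (fun i : nat => i%:R : R).
  by move=> i j /eqP; rewrite eqr_nat => /eqP.
have natr_mpoly_inj : injective (fun i : nat => i%:R : A).
  by move=> i j /eqP; rewrite -!mpolyC_nat mpolyC_eq => /eqP/natr_inj.
have [i nz_cMi] := poly_nat_nonroot natr_inj cM_neq0.
have [q fiE] := fy_sq i%:R; have [lead_q2 _] := mlead_sqrt_fy nz_cMi fiE.
have MN : M = (mlead q + mlead q)%MM by rewrite -lead_q2.
have [j [S SE]] := cM_frac_nsqrt (mlead q).
exists (cM ^+ j.*2.+1), (cM^:MP * S); split; first by rewrite expf_neq0 // cM_neq0.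
pose P := (cM^:MP * S) ^+ 2 - f * (cM ^+ j.*2.+1)^:MP.
suff : P * cM^:MP = 0.
  move/eqP; rewrite mulf_eq0 map_poly_eq0 (negbTE cM_neq0) orbF subr_eq0.
  by move/eqP ->.
apply: (poly_nat_roots0 natr_mpoly_inj) => k.
rewrite -mpolyC_nat hornerM horner_map /=.
have [->|nz_cMk] := eqVneq cM.[k%:R] 0; first by rewrite mpolyC0 mulr0.
have [s sq] := nsqrt_exists MN nz_cMk; have [_ sqE _ _] := sq.
rewrite /P hornerD hornerN (horner_exp (cM^:MP * S)) !hornerM !horner_map /=.
rewrite -(SE _ _ sq) -sqE -!mul_mpolyC !rmorphXn /= (horner_exp cM) rmorphXn.
by rewrite (exprS _ j.*2) -addnn exprD; ring.
Qed.

End SquareUpToFactor.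

Section Descent.
Variables (R : rcfType) (n : nat).
Local Notation A := {mpoly R[n]}.
Local Notation "g ^:MP" := (map_poly (@mpolyC n R) g)
  (at level 2, format "g ^:MP").

Definition ev_cplx (z : R[i]) : {poly R} -> R[i] :=
  horner_morph (fun x => mulrC z (real_complex R x)).

Definition ev_cplx_mpoly (z : R[i]) : {poly A} -> {mpoly R[i][n]} :=
  horner_morph (fun x => mulrC z%:MP (map_mpoly (real_complex R) x)).

(* Without these instances, rewriting with rmorphM and friends unfolds the two
   evaluations into anonymous horner_morph terms. *)
HB.instance Definition _ z := GRing.RMorphism.copy (ev_cplx z) (ev_cplx z).
HB.instance Definition _ z :=
  GRing.RMorphism.copy (ev_cplx_mpoly z) (ev_cplx_mpoly z).

Lemma ev_cplx_mpolyC z d : ev_cplx_mpoly z d^:MP = (ev_cplx z d)%:MP.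
Proof.
rewrite /ev_cplx_mpoly /ev_cplx /horner_morph -map_poly_comp.
rewrite (eq_map_poly (g := @mpolyC n _ \o real_complex R)); last first.
  by move=> x /=; rewrite map_mpolyC.
by rewrite map_poly_comp horner_map.
Qed.

Lemma mcoeff_ev_cplx_mpoly z P m :
  (ev_cplx_mpoly z P)@_m = ev_cplx z (map_poly (mcoeff m) P).
Proof.
rewrite /ev_cplx_mpoly /ev_cplx /horner_morph mcoeff_horner_mpolyC -!map_poly_comp.
by congr (_.[_]); apply: eq_map_poly => x /=; rewrite mcoeff_map_mpoly.
Qed.

Lemma ev_cplx_mpoly_minimal z k :
    (forall r : {poly R}, (size r < k)%N -> ev_cplx z r = 0 -> r = 0) ->
  forall P : {poly A}, (size P < k)%N -> ev_cplx_mpoly z P = 0 -> P = 0.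
Proof.
move=> min_k P lt_Pk evP.
have Pm0 m : map_poly (mcoeff m) P = 0.
  apply: min_k; first exact: leq_ltn_trans (size_poly _ _) lt_Pk.
  by rewrite -mcoeff_ev_cplx_mpoly evP mcoeff0.
apply/polyP => i; apply/mpolyP => m.
have := congr1 (fun q : {poly R} => q`_i) (Pm0 m).
by rewrite /= coef_map !coef0 mcoeff0.
Qed.

Lemma minimal_root_divides (f : {poly A}) (d e p : {poly R}) (S : {poly A}) z :
    p \is monic -> ev_cplx z p = 0 ->
    (forall r : {poly R}, (size r < size p)%N -> ev_cplx z r = 0 -> r = 0) ->
    ev_cplx z d = 0 -> f * d^:MP = e^:MP * S ^+ 2 ->
  e = Pdiv.CommonRing.rdivp e p * p \/
  S = Pdiv.CommonRing.rdivp S p^:MP * p^:MP.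
Proof.
move=> mon_p pz min_p dz fdE.
have := congr1 (ev_cplx_mpoly z) fdE.
rewrite 2!rmorphM rmorphXn /= !ev_cplx_mpolyC dz mpolyC0 mulr0 => /esym/eqP.
rewrite mulf_eq0 expf_eq0 mpolyC_eq0 /= => /orP[/eqP ez|/eqP Sz].
  by left; apply: rdivp_eq_of_root mon_p pz min_p ez.
right; apply: rdivp_eq_of_root _ _ _ Sz.
- by rewrite map_monic.
- by rewrite /= ev_cplx_mpolyC pz mpolyC0.
- by rewrite size_map_poly; apply: ev_cplx_mpoly_minimal.
Qed.

Lemma descent_step (f : {poly A}) (d e : {poly R}) (S : {poly A}) :
    (1 < size d)%N -> f * d^:MP = e^:MP * S ^+ 2 ->
  exists (d' e' : {poly R}) (S' : {poly A}),
    [/\ d' != 0, (size d' < size d)%N & f * d'^:MP = e'^:MP * S' ^+ 2].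
Proof.
move=> gt1_d fdE; have nz_d : d != 0 by rewrite -size_poly_gt0 ltnW.
have [z dz] : exists z, ev_cplx z d = 0.
  have /closed_rootP[z /rootP dz] : size (map_poly (real_complex R) d) != 1.
    by rewrite size_map_poly neq_ltn gt1_d orbT.
  by exists z.
have [p [mon_p pz gt1_p min_p]] := exists_minimal_monic_root nz_d dz.
set d' := Pdiv.CommonRing.rdivp d p.
have dE : d = d' * p := rdivp_eq_of_root mon_p pz min_p dz.
have nz_d' : d' != 0 by apply: contraNneq nz_d; rewrite dE => ->; rewrite mul0r.
have lt_d'd : (size d' < size d)%N.
  rewrite [in X in (_ < X)%N]dE size_Mmonic //.
  by move: gt1_p; case: (size p) => [|[|k]] // _; rewrite !addnS ltnS leq_addr.
have nz_p : p^:MP != 0 by rewrite map_poly_eq0 monic_neq0.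
have [eE|SE] := minimal_root_divides mon_p pz min_p dz fdE.
  exists d', (Pdiv.CommonRing.rdivp e p), S; split=> //.
  apply: (mulIf nz_p); rewrite -mulrA -rmorphM -dE fdE [in LHS]eE rmorphM; ring.
exists d', (e * p), (Pdiv.CommonRing.rdivp S p^:MP); split=> //.
apply: (mulIf nz_p); rewrite -mulrA -rmorphM -dE fdE [in LHS]SE rmorphM; ring.
Qed.

Lemma descent (f : {poly A}) (d e : {poly R}) (S : {poly A}) :
    d != 0 -> f * d^:MP = e^:MP * S ^+ 2 ->
  exists (g : {poly R}) (h : {poly A}), f = g^:MP * h ^+ 2.
Proof.
elim: {d}(size d).+1 {-2}d (ltnSn (size d)) e S => [//|k IH] d lt_dk e S nz_d fdE.
have [le_d1|gt1_d] := leqP (size d) 1.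
  have dC := size1_polyC le_d1; set c := d`_0 in dC.
  have nz_c : c != 0 by apply: contraNneq nz_d; rewrite dC => ->.
  exists (c^-1%:P * e), S.
  by rewrite rmorphM -mulrA -fdE dC mulrCA -rmorphM -polyCM mulVf // rmorph1 mulr1.
have [d' [e' [S' [nz_d' lt_d'd fdE']]]] := descent_step gt1_d fdE.
exact: IH (leq_trans lt_d'd _) e' S' nz_d' fdE'.
Qed.

End Descent.

Theorem lemma4p3 (R : realType) (n : nat) (f : {poly {mpoly R[n]}}) :
  (forall y0 : R, exists q : {mpoly R[n]}, f.[y0%:MP] = q ^+ 2) ->
  exists (g : {poly R}) (h : {poly {mpoly R[n]}}),
    f = map_poly (fun c : R => c%:MP) g * h ^+ 2.
Proof.
move=> fy_sq; have [->|nz_f] := eqVneq f 0.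
  by exists 0, 0; rewrite rmorph0 mul0r.
have [d [S [nz_d fdE]]] := square_up_to_factor nz_f fy_sq.
have fdE1 : f * map_poly (@mpolyC n R) d = map_poly (@mpolyC n R) 1 * S ^+ 2.
  by rewrite rmorph1 mul1r.
have [g [h fE]] := descent nz_d fdE1.
by exists g, h.
Qed.
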